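(* Let $(S,\cdot)$ be a discrete semigroup, let $\mathcal{F}$ be a filter on $S$ such that $\overline{\mathcal{F}}$ is a subsemigroup of $\beta S$, let $(X,\langle T_s\rangle_{s\in S})$ be a dynamical system, and let $x,y\in X$. If $x$ and $y$ are $\mathcal{F}$-proximal, then there is a minimal left ideal $L$ of $\overline{\mathcal{F}}$ such that $T_u(x)=T_u(y)$ for all $u\in L$.
   Context: $\beta S$ is the Stone–Čech compactification of $S$ (ultrafilters on $S$) with the extended operation making it a compact right topological semigroup; $\overline{\mathcal{F}}=\bigcap_{F\in\mathcal{F}}\overline{F}$ is the set of ultrafilters containing $\mathcal{F}$. A dynamical system $(X,\langle T_s\rangle_{s\in S})$: $X$ compact Hausdorff, each $T_s$ continuous, $T_s\circ T_t=T_{st}$. For $p\in\beta S$, $T_p(x)=p\text{-}\lim_{s\in S}T_s(x)$, and $T_p\circ T_q=T_{pq}$. Points $x,y$ are $\mathcal{F}$-proximal if for every neighbourhood $U$ of the diagonal in $X\times X$ and every $F\in\mathcal{F}$ there is $s\in F$ with $(T_s(x),T_s(y))\in U$. *)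

From HB Require Import structures.
From mathcomp Require Import all_boot all_order all_algebra.
From mathcomp Require Import boolp classical_sets functions filter topology.
Set Implicit Arguments. Unset Strict Implicit. Unset Printing Implicit Defensive.
Local Open Scope classical_set_scope.

Section BetaS.
Variables (S : Type) (op : S -> S -> S).

Definition betaS : set (set_system S) := [set p | UltraFilter p].

(* Extended operation on beta S (Hindman--Strauss convention):
   A \in p q  iff  {s | s^{-1} A \in q} \in p,  s^{-1}A = {t | s t \in A}. *)
Definition bmul (p q : set_system S) : set_system S :=
  [set A | p [set s | q [set t | A (op s t)]]].

(* closure of a filter F in beta S: the ultrafilters containing F *)
Definition Fbar (F : set_system S) : set (set_system S) :=
  [set p | UltraFilter p /\ F `<=` p].

Definition subsemigroup (A : set (set_system S)) :=
  forall p q, A p -> A q -> A (bmul p q).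

Definition left_ideal (A L : set (set_system S)) :=
  L !=set0 /\ L `<=` A /\ (forall p q, A p -> L q -> L (bmul p q)).

Definition minimal_left_ideal (A L : set (set_system S)) :=
  left_ideal A L /\ (forall L', left_ideal A L' -> L' `<=` L -> L' = L).
End BetaS.

Section Dyn.
Variables (S : Type) (op : S -> S -> S) (X : topologicalType) (T : S -> X -> X).

(* T_p(x) = p-lim_{s} T_s(x): the (unique, as X is compact Hausdorff)
   limit of the image filter; x serves only as a default value. *)
Definition Tp (p : set_system S) (x : X) : X :=
  xget x [set z | (fun s => T s x) @ p --> z].

Definition diag_nbhd (U : set (X * X)) :=
  exists V : set (X * X), open V /\ (forall z, V (z, z)) /\ V `<=` U.

Definition F_proximal (F : set_system S) (x y : X) :=
  forall U, diag_nbhd U -> forall A, F A -> exists2 s, A s & U (T s x, T s y).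
End Dyn.

(* Proximality of x and y along F says that F, together with the sets
   {s | (T_s x, T_s y) \in U} for U a neighbourhood of the diagonal, has the
   finite intersection property.  An ultrafilter p refining all of them lies
   in Fbar F, and T_p x = T_p y because in the compact Hausdorff, hence
   regular, space X two distinct points have neighbourhoods whose product
   avoids some neighbourhood of the diagonal.  The left ideal Fbar F p of the
   compact semigroup Fbar F contains a minimal left ideal L: Zorn's lemma
   applies to the principal left ideals Fbar F q, which are closed in beta S,
   so that a chain of them has a nonempty intersection containing another
   one.  Finally every u in L is r p with r in Fbar F, whence
   T_u x = T_r (T_p x) = T_r (T_p y) = T_u y. *)

From HB Require Import structures.
From mathcomp Require Import all_boot all_order all_algebra.
From mathcomp Require Import boolp classical_sets functions filter topology.
Local Open Scope classical_set_scope.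

Lemma setVsetC_ultra {T : Type} (F : set_system T) :
  ProperFilter F -> (forall A, F A \/ F (~` A)) -> UltraFilter F.
Proof.
move=> FF FVC; split=> // G GF FG; apply/seteqP; split=> [A GA|//].
have [//|FnA] := FVC A.
have : G (A `&` ~` A) by apply: filterI => //; exact: FG.
by rewrite setICr => /filter_not_empty.
Qed.

Lemma fmap_ultra {T U : Type} (f : T -> U) {p : set_system T} :
  UltraFilter p -> UltraFilter (f @ p).
Proof.
move=> up; apply: setVsetC_ultra => A.
exact: (in_ultra_setVsetC (f @^-1` A) up).
Qed.

Lemma ultra_meets {T : Type} (F G : set_system T) :
  Filter F -> Filter G -> F `#` G ->
  exists p, [/\ UltraFilter p, F `<=` p & G `<=` p].
Proof.
move=> FF FG FmG.
pose H := filter_from [set AB | F AB.1 /\ G AB.2] (fun AB => AB.1 `&` AB.2).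
have HF : ProperFilter H.
  apply: filter_from_proper => [|AB [FA GB]]; last exact: FmG.
  apply: filter_from_filter => [|[A B] [C D] [FA GB] [FC GD]].
    by exists (setT, setT); split; exact: filterT.
  exists (A `&` C, B `&` D); first by split; exact: filterI.
  by move=> x [[Ax Cx] [Bx Dx]].
have [p [up Hp]] := ultraFilterLemma HF.
exists p; split=> // [A FA|B GB]; apply: Hp.
  by exists (A, setT) => [|x []//]; split=> //; exact: filterT.
by exists (setT, B) => [|x []//]; split=> //; exact: filterT.
Qed.

Lemma bigcap_proper_filter {T : Type} (P : set (set_system T)) : P !=set0 ->
  (forall u, P u -> ProperFilter u) -> ProperFilter (\bigcap_(u in P) u).
Proof.
move=> [u0 Pu0] PF; apply: Build_ProperFilter_ex => [A /(_ u0 Pu0) u0A|].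
  by have u0F := PF _ Pu0; exact: filter_ex u0A.
split=> [u /PF uF|A B PA PB u Pu|A B AB PA u Pu]; first exact: filterT.
  by have uF := PF _ Pu; exact: filterI (PA _ Pu) (PB _ Pu).
by have uF := PF _ Pu; exact: filterS AB (PA _ Pu).
Qed.

Lemma bigcup_chain_proper_filter {T I : Type} {A : set I}
    {K : I -> set_system T} :
  A !=set0 -> (forall i, A i -> ProperFilter (K i)) ->
  total_on A (fun i j => K i `<=` K j) -> ProperFilter (\bigcup_(i in A) K i).
Proof.
move=> [i0 Ai0] KF Ktot; apply: Build_ProperFilter_ex => [B [i Ai KiB]|].
  by have KiF := KF _ Ai; exact: filter_ex KiB.
split=> [|B C [i Ai KiB] [j Aj KjC]|B C BC [i Ai KiB]].
- by exists i0 => //; have Ki0F := KF _ Ai0; exact: filterT.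
- have [ij|ji] := Ktot _ _ Ai Aj.
    by exists j => //; have KjF := KF _ Aj; exact: filterI (ij _ KiB) KjC.
  by exists i => //; have KiF := KF _ Ai; exact: filterI KiB (ji _ KjC).
- by exists i => //; have KiF := KF _ Ai; exact: filterS BC KiB.
Qed.

Section MinimalLeftIdeals.
Context {S : Type} {op : S -> S -> S} (op_assoc : associative op).
Context {F : set_system S} (F_filter : Filter F).
Context (F_semi : subsemigroup op (Fbar F)).

Lemma bmulA r s q : bmul op r (bmul op s q) = bmul op (bmul op r s) q.
Proof.
apply: funext => A; rewrite /bmul /=; congr (r _).
apply: funext => u; congr (s _); apply: funext => w; congr (q _).
by apply: funext => v /=; rewrite op_assoc.
Qed.

Definition Fbar_mul q := [set bmul op r q | r in Fbar F].

Lemma Fbar_mul_Fbar {q} : Fbar F q -> Fbar_mul q `<=` Fbar F.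
Proof. by move=> Fq _ [r Fr <-]; exact: F_semi. Qed.

Lemma left_ideal_Fbar_mul {q} :
  Fbar F q -> left_ideal op (Fbar F) (Fbar_mul q).
Proof.
move=> Fq; split; first by exists (bmul op q q), q.
split; first exact: Fbar_mul_Fbar.
move=> p _ Fp [r Fr <-].
by exists (bmul op p r); [exact: F_semi|exact/esym/bmulA].
Qed.

Lemma Fbar_mul_sub {L q} : left_ideal op (Fbar F) L -> L q -> Fbar_mul q `<=` L.
Proof. by move=> [_ [_ Lmul]] Lq _ [r Fr <-]; exact: Lmul. Qed.

(* The ultrafilter form of: [Fbar_mul q] is closed in beta S. *)
Lemma Fbar_mul_closed {q p} : Fbar F q -> UltraFilter p ->
  \bigcap_(u in Fbar_mul q) u `<=` p -> Fbar_mul q p.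
Proof.
move=> [uq Fq] up qp.
pose G := filter_from p (fun A => [set s | q [set t | A (op s t)]]).
have GF : Filter G.
  apply: filter_from_filter => [|A B pA pB]; first by exists setT; exact: filterT.
  exists (A `&` B); first exact: filterI.
  by move=> s qAB; split; apply: filterS qAB => t [].
have FmG : F `#` G.
  move=> B C FB [A pA AC].
  suff [s [Bs qAs]] : B `&` [set s | q [set t | A (op s t)]] !=set0.
    by exists s; split => //; exact: AC.
  apply: contrapT => nBA.
  have pnA : p (~` A).
    apply: qp => _ [r [ur Fr] <-]; apply: (filterS _ (Fr _ FB)) => s Bs.
    have [qA|//] := in_ultra_setVsetC [set t | A (op s t)] uq.
    by case: nBA; exists s.
  by apply: (filter_not_empty p); rewrite -(setICr A); exact: filterI.
have [r [ur Fr Gr]] := ultra_meets _ _ F_filter GF FmG.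
have [urq _] := F_semi _ _ (conj ur Fr) (conj uq Fq).
exists r => //.
by apply: max_filter => A pA; apply: Gr; exists A.
Qed.

Lemma Fbar_mul_chain_lbound (A : set (set_system S)) :
  A !=set0 -> A `<=` Fbar F ->
  total_on A (fun q1 q2 => Fbar_mul q1 `<=` Fbar_mul q2) ->
  exists2 p, Fbar F p & forall q, A q -> Fbar_mul p `<=` Fbar_mul q.
Proof.
move=> [q0 Aq0] AF Atot.
pose K q := \bigcap_(u in Fbar_mul q) u.
have KF q : A q -> ProperFilter (K q).
  move=> Aq; apply: bigcap_proper_filter => [|u].
    by exists (bmul op q q), q => //; exact: AF.
  by move=> /(Fbar_mul_Fbar (AF _ Aq)) [uu _]; exact: ultra_proper.
have Ktot : total_on A (fun q1 q2 => K q1 `<=` K q2).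
  move=> q1 q2 Aq1 Aq2; have [q12|q21] := Atot _ _ Aq1 Aq2.
    by right => B KB u /q12; exact: KB.
  by left => B KB u /q21; exact: KB.
have KAF := bigcup_chain_proper_filter (ex_intro _ q0 Aq0) KF Ktot.
have [p [up Kp]] := ultraFilterLemma KAF.
have Ap q : A q -> Fbar_mul q p.
  move=> Aq; apply: Fbar_mul_closed (AF _ Aq) up _ => B KB.
  by apply: Kp; exists q.
exists p; first exact: Fbar_mul_Fbar (AF _ Aq0) _ (Ap _ Aq0).
by move=> q Aq; apply: Fbar_mul_sub (left_ideal_Fbar_mul (AF _ Aq)) (Ap _ Aq).
Qed.

Lemma minimal_left_ideal_Fbar_mul q : Fbar F q ->
  (forall u, Fbar F u ->
    Fbar_mul u `<=` Fbar_mul q -> Fbar_mul q `<=` Fbar_mul u) ->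
  minimal_left_ideal op (Fbar F) (Fbar_mul q).
Proof.
move=> Fq qmin; split=> [|L Lideal Lq]; first exact: left_ideal_Fbar_mul.
have [[u Lu] [LF _]] := Lideal.
have uL := Fbar_mul_sub Lideal Lu.
apply/seteqP; split=> //.
exact: subset_trans (qmin u (LF _ Lu) (subset_trans uL Lq)) uL.
Qed.

Lemma left_ideal_has_minimal {L0} : left_ideal op (Fbar F) L0 ->
  exists2 L, minimal_left_ideal op (Fbar F) L & L `<=` L0.
Proof.
move=> L0ideal; have [[q0 L0q0] [L0F _]] := L0ideal.
pose P q := Fbar F q /\ Fbar_mul q `<=` L0.
pose R (a b : {q | P q}) := `[< Fbar_mul (sval b) `<=` Fbar_mul (sval a) >].
have P0 : P q0 := conj (L0F _ L0q0) (Fbar_mul_sub L0ideal L0q0).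
have [[q [Fq qL0]] qmax] : exists t, premaximal R t.
  apply: (ZL_preorder (exist _ q0 P0)) => [a|a b c /asboolP ab /asboolP bc|B Btot].
  - exact/asboolP.
  - exact/asboolP/(subset_trans bc ab).
  have [[b0 Bb0]|B0] := pselect (B !=set0); last first.
    by exists (exist _ q0 P0) => b Bb; case: B0; exists b.
  have [|_ [b _ <-]|_ _ [b1 Bb1 <-] [b2 Bb2 <-]|p Fp pB] :=
    Fbar_mul_chain_lbound (sval @` B).
  - by exists (sval b0), b0.
  - by case: (svalP b).
  - by case: (Btot _ _ Bb1 Bb2) => /asboolP; [right|left].
  have Pp : P p.
    by split=> //; exact: subset_trans (pB _ (imageP _ Bb0)) (svalP b0).2.
  by exists (exist _ p Pp) => b Bb; apply/asboolP/pB/imageP.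
exists (Fbar_mul q) => //; apply: minimal_left_ideal_Fbar_mul => // u Fu uq.
have Pu : P u := conj Fu (subset_trans uq qL0).
by have /asboolP := qmax (exist _ u Pu) (asboolT uq).
Qed.

End MinimalLeftIdeals.

#[global] Instance diag_nbhd_filter (X : topologicalType) :
  Filter (@diag_nbhd X).
Proof.
split=> [|U1 U2 [V1 [oV1 [dV1 V1U1]]] [V2 [oV2 [dV2 V2U2]]]|U1 U2 U12].
- by exists setT; split; [exact: openT|split].
- exists (V1 `&` V2); split; first exact: openI.
  by split=> [z|w [/V1U1 ? /V2U2 ?]]; split.
- move=> [V [oV [dV VU1]]]; exists V.
  by split=> //; split=> //; exact: subset_trans U12.
Qed.

Lemma open_setCM {U V : topologicalType} (A : set U) (B : set V) :
  closed A -> closed B -> open (~` (A `*` B)).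
Proof.
move=> cA cB; rewrite openE => -[u v] /= /not_andP nAB.
rewrite /interior /nbhs /=.
case: nAB => [nAu|nBv].
- exists (~` A, setT) => [|[u' v'] [/= nAu' _] []//]; split; last exact: filterT.
  by apply: open_nbhs_nbhs; split=> //; exact: closed_openC.
- exists (setT, ~` B) => [|[u' v'] [_ /= nBv'] []//]; split; first exact: filterT.
  by apply: open_nbhs_nbhs; split=> //; exact: closed_openC.
Qed.

Lemma diag_nbhd_separates {X : topologicalType} :
  compact [set: X] -> hausdorff_space X -> forall a b : X, a != b ->
  exists Ba Bb V, [/\ nbhs a Ba, nbhs b Bb, diag_nbhd V &
    forall u v, Ba u -> Bb v -> ~ V (u, v)].
Proof.
move=> X_compact X_hausdorff a b ab.
have closure_nbhs_sub (c : X) (O : set X) :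
    open O -> O c -> exists2 B, nbhs c B & closure B `<=` O.
  move=> oO Oc; have cT : nbhs c [set: X] by exact: filterT.
  exact: compact_regular X_hausdorff X_compact cT _ (open_nbhs_nbhs (conj oO Oc)).
have := X_hausdorff; rewrite open_hausdorff => /(_ a b ab).
move=> [[Oa Ob] /= [/set_mem aOa /set_mem bOb] [oOa oOb /eqP Oab0]].
have [Ba aBa BaOa] := closure_nbhs_sub _ _ oOa aOa.
have [Bb bBb BbOb] := closure_nbhs_sub _ _ oOb bOb.
exists Ba, Bb, (~` (closure Ba `*` closure Bb)); split=> //; last first.
  by move=> u v Bau Bbv; apply; split; exact: subset_closure.
exists (~` (closure Ba `*` closure Bb)); split.
  by apply: open_setCM; exact: closed_closure.
split=> // z [/BaOa Oaz /BbOb Obz].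
by have : (Oa `&` Ob) z by []; rewrite Oab0.
Qed.

Section BetaSAction.
Context {S : Type} {op : S -> S -> S} {X : topologicalType}.
Context (X_compact : compact [set: X]) (X_hausdorff : hausdorff_space X).
Context {T : S -> X -> X} (T_cont : forall s, continuous (T s))
  (T_act : forall s t, T s \o T t = T (op s t)).

Lemma Tp_cvg p z : UltraFilter p -> (fun s => T s z) @ p --> Tp T p z.
Proof.
move=> up; have := X_compact; rewrite compact_ultra.
move=> /(_ _ (fmap_ultra (fun s => T s z) up) filterT) [c [_ pc]].
by rewrite /Tp; exact: (xgetI z pc).
Qed.

Lemma Tp_unique p z v :
  ProperFilter p -> (fun s => T s z) @ p --> v -> Tp T p z = v.
Proof.
move=> pp pv; apply: (cvg_unique X_hausdorff (F := (fun s => T s z) @ p)) => //.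
by rewrite /Tp; exact: (xgetI z pv).
Qed.

Lemma Tp_bmul r q z : UltraFilter r -> UltraFilter q ->
  ProperFilter (bmul op r q) -> Tp T (bmul op r q) z = Tp T r (Tp T q z).
Proof.
move=> ur uq rq; apply: Tp_unique => W /=; rewrite nbhsE => -[O [oO Ow] OW].
have : r [set s | O (T s (Tp T q z))] by apply: Tp_cvg; exact: open_nbhs_nbhs.
apply: filterS => s Os.
have sO : nbhs (T s (Tp T q z)) O by exact: open_nbhs_nbhs.
have qO : q [set t | O (T s (T t z))] := Tp_cvg q z uq _ (T_cont s _ _ sO).
by apply: filterS qO => t Ot; apply: OW; rewrite -T_act.
Qed.

Lemma Tp_diag p x y : UltraFilter p ->
  (forall U, diag_nbhd U -> p [set s | U (T s x, T s y)]) ->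
  Tp T p x = Tp T p y.
Proof.
move=> up pdiag; apply: contrapT => /eqP xy.
have [Ba [Bb [V [aBa bBb dV BaBbV]]]] :=
  diag_nbhd_separates X_compact X_hausdorff _ _ xy.
have : p ([set s | V (T s x, T s y)] `&`
          ([set s | Ba (T s x)] `&` [set s | Bb (T s y)])).
  apply: filterI; first exact: pdiag.
  by apply: filterI; [exact: Tp_cvg x up _ aBa|exact: Tp_cvg y up _ bBb].
by move=> /filter_ex [s [Vs [Bas Bbs]]]; exact: BaBbV Bas Bbs Vs.
Qed.

Lemma proximal_Tp_eq {F x y} : Filter F -> F_proximal T F x y ->
  exists2 p, Fbar F p & Tp T p x = Tp T p y.
Proof.
move=> FF prox.
pose G := filter_from (@diag_nbhd X) (fun U => [set s | U (T s x, T s y)]).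
have GF : Filter G.
  apply: filter_from_filter => [|U1 U2 dU1 dU2].
    by exists setT; exact: filterT.
  by exists (U1 `&` U2) => //; exact: filterI.
have FmG : F `#` G.
  move=> A B FA [U dU UB]; have [s As Us] := prox U dU A FA.
  by exists s; split => //; exact: UB.
have [p [up Fp Gp]] := ultra_meets _ _ FF GF FmG.
by exists p => //; apply: Tp_diag => // U dU; apply: Gp; exists U.
Qed.

End BetaSAction.

Theorem lemma13 (S : Type) (op : S -> S -> S) (op_assoc : associative op)
  (F : set_system S) (F_filter : ProperFilter F)
  (F_semi : subsemigroup op (Fbar F))
  (X : topologicalType) (X_compact : compact [set: X])
  (X_hausdorff : hausdorff_space X)
  (T : S -> X -> X) (T_cont : forall s, continuous (T s))
  (T_act : forall s t, T s \o T t = T (op s t))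
  (x y : X) :
  F_proximal T F x y ->
  exists L, minimal_left_ideal op (Fbar F) L /\
    (forall u, L u -> Tp T u x = Tp T u y).
Proof.
move=> prox.
have [p Fp Tpxy] := proximal_Tp_eq X_compact X_hausdorff _ prox.
have pideal := left_ideal_Fbar_mul op_assoc F_semi Fp.
have [L Lmin Lp] := left_ideal_has_minimal op_assoc _ F_semi pideal.
exists L; split=> // _ /Lp [r Fr <-].
have [[ur _] [up _]] := (Fr, Fp).
have [urp _] := F_semi _ _ Fr Fp.
by rewrite !(Tp_bmul X_compact X_hausdorff T_cont T_act) // Tpxy.
Qed.
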